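(* Let $A',B'$ be subspaces of a finite-dimensional Hilbert space $\mathcal{H}$, with orthogonal projectors $\Pi_{A'},\Pi_{B'}$, and let $0\le\epsilon<1$. Then there exists a (possibly zero) subspace $A\subseteq A'$ with the following properties. (a) For all $v\in A$, $\|\Pi_{B'}v\|_2^2\ge(1-\sqrt{\epsilon})\|v\|_2^2$. (b) Letting $B\subseteq B'$ be the subspace spanned by the vectors $\Pi_{B'}v$, $v\in A$, and $\Pi_B$ its orthogonal projector, $\Pi_B\le(1-\sqrt{\epsilon})^{-1}\Pi_{B'}\Pi_{A'}\Pi_{B'}$ (in the positive semidefinite order). (c) If $\rho$ is any positive operator with $\operatorname{Tr}\rho\le 1$, support contained in $A'$, and $\operatorname{Tr}[\rho\Pi_{B'}]\ge1-\epsilon$, then $A$ is nonzero and $\operatorname{Tr}[\rho\,\Pi_B]\ge1-2\sqrt{\epsilon}$. *)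

(* Finite-dimensional Hilbert space = C^n with the standard
   inner product, C any numClosedFieldType (e.g. the complex numbers).
   Convention: vectors are ROW vectors 'rV[C]_n, an operator is represented by
   the matrix M acting as v |-> v *m M; subspaces are row spaces of matrices
   (mxalgebra, %MS). *)
From HB Require Import structures.
From mathcomp Require Import all_boot all_order all_algebra.
Set Implicit Arguments. Unset Strict Implicit. Unset Printing Implicit Defensive.
Import Order.TTheory GRing.Theory Num.Theory.
Local Open Scope ring_scope.

Definition adjmx (C : numClosedFieldType) (m n : nat) (M : 'M[C]_(m, n)) :
  'M[C]_(n, m) := (map_mx Num.conj M)^T.

Definition nrm2 (C : numClosedFieldType) (n : nat) (v : 'rV[C]_n) : C :=
  (v *m adjmx v) 0 0.

Definition hermitian (C : numClosedFieldType) (n : nat) (M : 'M[C]_n) : Prop :=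
  adjmx M = M.

Definition psd (C : numClosedFieldType) (n : nat) (M : 'M[C]_n) : Prop :=
  hermitian M /\ forall v : 'rV[C]_n, 0 <= (v *m M *m adjmx v) 0 0.

Definition loewner_le (C : numClosedFieldType) (n : nat) (M N : 'M[C]_n) : Prop :=
  psd (N - M).

Definition is_orth_proj (C : numClosedFieldType) (n m : nat)
    (P : 'M[C]_n) (U : 'M[C]_(m, n)) : Prop :=
  [/\ hermitian P, P *m P = P & (P == U)%MS].

From Pilot Require Import Defs.
From HB Require Import structures.
From mathcomp Require Import all_boot all_order all_algebra.
From mathcomp Require Import ring.
Import Order.TTheory GRing.Theory Num.Theory.
Local Open Scope ring_scope.

(* Diagonalise the compression K = PA' PB' PA' = U^* diag(d) U and let A be
   spanned by the eigenvectors u_i with eigenvalue d_i >= c := 1 - sqrt eps.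
   They lie in A', and ||PB' v||^2 = <v, K v> >= c ||v||^2 on A, which is (a).
   The vectors PB' u_i are pairwise orthogonal with squared norms d_i, so
   PB = sum_i d_i^-1 |PB' u_i><PB' u_i| <= c^-1 PB' (sum_i |u_i><u_i|) PB'
   <= c^-1 PB' PA' PB', which is (b).  With the weights r_i = <u_i, rho u_i>,
   Tr(rho PB') = sum_i r_i d_i >= 1 - eps and Tr(rho PB) = sum_(d_i >= c) r_i d_i,
   and a Markov bound on the deficits 1 - d_i shows that the latter is at least
   1 - sqrt eps, which gives (c). *)

Set Implicit Arguments.
Unset Strict Implicit.
Unset Printing Implicit Defensive.

Lemma threshold_loss_le (R : numDomainType) (t r d : R) :
  0 <= t -> t <= 1 -> 0 <= r -> d <= 1 ->
  t * (r * ((1 - (1 - t <= d)%R%:R) * d)) <= (1 - t) * (r * (1 - d)).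
Proof.
move=> t_ge0 t_le1 r_ge0 d_le1; have c_ge0 : 0 <= 1 - t by rewrite subr_ge0.
have [_|] := boolP (1 - t <= d); first by rewrite subrr mul0r !mulr0 !mulr_ge0 ?subr_ge0.
rewrite -real_ltNge ?(ler_real d_le1) ?ger0_real // => lt_dc.
rewrite subr0 mul1r; apply: (@le_trans _ _ ((1 - t) * (r * t))).
  rewrite mulrCA [(1 - t) * _]mulrCA; apply: ler_wpM2l => //.
  by rewrite [_ * t]mulrC; apply: ler_wpM2l => //; exact: ltW.
do 2!apply: ler_wpM2l => //.
by rewrite lerBrDl addrC -lerBrDl ltW.
Qed.

(* Markov's inequality for the deficits 1 - d i, whose r-mean is at most t^2. *)
Lemma threshold_mass_ge (R : numDomainType) (I : finType) (r d : I -> R) (t : R) :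
  0 <= t -> t <= 1 -> (forall i, 0 <= r i) -> (forall i, d i <= 1) ->
  \sum_i r i <= 1 -> 1 - t ^+ 2 <= \sum_i r i * d i ->
  1 - t <= \sum_i r i * ((1 - t <= d i)%R%:R * d i).
Proof.
move=> t_ge0 t_le1 r_ge0 d_le1 sum_r sum_rd.
pose loss i := r i * ((1 - (1 - t <= d i)%R%:R) * d i).
have deficit_ge0 i : 0 <= r i * (1 - d i) by rewrite mulr_ge0 ?subr_ge0.
have deficit : \sum_i r i * (1 - d i) <= t ^+ 2.
  under eq_bigr do rewrite mulrBr mulr1.
  by rewrite sumrB (le_trans (lerB sum_r sum_rd)) // subKr.
rewrite (_ : \sum_i _ = \sum_i r i * d i - \sum_i loss i); last first.
  by rewrite -sumrB; apply: eq_bigr => i _; rewrite /loss; ring.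
(* For t = 0 Markov's bound is vacuous, but then no weight sits on d i < 1. *)
have [t0|t_neq0] := eqVneq t 0.
  subst t; rewrite expr0n /= subr0 in deficit sum_rd.
  suff -> : \sum_i loss i = 0 by rewrite !subr0.
  apply: big1 => i _; rewrite /loss subr0.
  have [|] := boolP (1 <= d i); first by rewrite subrr mul0r mulr0.
  rewrite -real_ltNge ?(ler_real (d_le1 i)) // => lt_d1.
  have /eqP : r i * (1 - d i) = 0.
    apply: (@psumr_eq0P _ _ predT (fun i => r i * (1 - d i))) => //.
    by apply/le_anti; rewrite sumr_ge0 // andbT.
  by rewrite mulf_eq0 subr_eq0 (gt_eqF lt_d1) orbF => /eqP->; rewrite mul0r.
have t_gt0 : 0 < t by rewrite lt_def t_neq0.
have loss_sum : t * \sum_i loss i <= (1 - t) * t ^+ 2.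
  rewrite mulr_sumr (le_trans (ler_sum _ (fun i _ => threshold_loss_le t_ge0 t_le1
    (r_ge0 i) (d_le1 i)))) // -mulr_sumr.
  by apply: ler_wpM2l; rewrite ?subr_ge0.
rewrite -(ler_pM2l t_gt0) [X in X <= _](_ : _ = t * (1 - t ^+ 2) - (1 - t) * t ^+ 2).
  by rewrite [X in _ <= X]mulrBr; apply: lerB loss_sum; apply: ler_wpM2l.
by ring.
Qed.

Local Notation "M ^H" := (adjmx M) (at level 8, format "M ^H").

Section HermitianMatrices.
Variable C : numClosedFieldType.
Implicit Types (m n p : nat).

Lemma adjmxE m n (M : 'M[C]_(m, n)) : M^H = map_mx Num.conj M^T.
Proof. by rewrite /adjmx map_trmx. Qed.

Lemma adjmxK m n (M : 'M[C]_(m, n)) : M^H^H = M.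
Proof. by rewrite !adjmxE trmxCK. Qed.

Lemma adjmxM m n p (M : 'M[C]_(m, n)) (N : 'M[C]_(n, p)) : (M *m N)^H = N^H *m M^H.
Proof. by rewrite !adjmxE trmx_mul map_mxM. Qed.

Lemma adjmxD m n (M N : 'M[C]_(m, n)) : (M + N)^H = M^H + N^H.
Proof. by rewrite !adjmxE linearD map_mxD. Qed.

Lemma adjmxB m n (M N : 'M[C]_(m, n)) : (M - N)^H = M^H - N^H.
Proof. by rewrite !adjmxE linearB map_mxB. Qed.

Lemma adjmxZ m n a (M : 'M[C]_(m, n)) : (a *: M)^H = a^* *: M^H.
Proof. by apply/matrixP=> i j; rewrite !adjmxE !mxE rmorphM. Qed.

Lemma adjmx1 n : (1%:M : 'M[C]_n)^H = 1%:M.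
Proof. by rewrite adjmxE trmx1 map_mx1. Qed.

Lemma diag_mxZ n a (d : 'rV[C]_n) : a *: diag_mx d = diag_mx (a *: d).
Proof. by rewrite linearZ. Qed.

Lemma adjmx_diag n (d : 'rV[C]_n) : (forall i, d 0 i \is Num.real) ->
  (diag_mx d)^H = diag_mx d.
Proof.
move=> d_real; rewrite adjmxE tr_diag_mx map_diag_mx; congr diag_mx.
by apply/rowP=> i; rewrite mxE; exact: conj_Creal.
Qed.

Lemma nrm2_dotmx n (v : 'rV[C]_n) : nrm2 v = dotmx v v.
Proof. by rewrite dotmxE /nrm2 adjmxE. Qed.

Lemma nrm2_ge0 n (v : 'rV[C]_n) : 0 <= nrm2 v.
Proof. by rewrite nrm2_dotmx dnorm_ge0. Qed.

Lemma nrm2_eq0 n (v : 'rV[C]_n) : (nrm2 v == 0) = (v == 0).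
Proof. by rewrite nrm2_dotmx dnorm_eq0. Qed.

Definition qform n (M : 'M[C]_n) (v : 'rV[C]_n) : C := (v *m M *m v^H) 0 0.

Lemma qformD n (M N : 'M[C]_n) v : qform (M + N) v = qform M v + qform N v.
Proof. by rewrite /qform mulmxDr mulmxDl mxE. Qed.

Lemma qformB n (M N : 'M[C]_n) v : qform (M - N) v = qform M v - qform N v.
Proof. by rewrite /qform mulmxBr mulmxBl !mxE. Qed.

Lemma qformZ n a (M : 'M[C]_n) v : qform (a *: M) v = a * qform M v.
Proof. by rewrite /qform -scalemxAr -scalemxAl mxE. Qed.

Lemma qform_conj m n (X : 'M[C]_(m, n)) (M : 'M[C]_m) v :
  qform (X^H *m M *m X) v = qform M (v *m X^H).
Proof. by rewrite /qform adjmxM adjmxK !mulmxA. Qed.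

Lemma qform_delta n (M : 'M[C]_n) i : qform M (delta_mx 0 i) = M i i.
Proof. by rewrite /qform adjmxE -rowE trmx_delta map_delta_mx -colE !mxE. Qed.

Lemma nrm2_mulmx m n (v : 'rV[C]_m) (M : 'M[C]_(m, n)) :
  nrm2 (v *m M) = qform (M *m M^H) v.
Proof. by rewrite /nrm2 /qform adjmxM !mulmxA. Qed.

Lemma qform1 n (v : 'rV[C]_n) : qform 1%:M v = nrm2 v.
Proof. by rewrite /qform mulmx1. Qed.

Lemma psd_orth_proj n (P : 'M[C]_n) : Defs.hermitian P -> P *m P = P -> psd P.
Proof.
move=> P_herm P_idem; split=> // v; rewrite -/(qform P v) -[P in qform P]P_idem.
by rewrite -[P in P *m _]P_herm -[P^H]mulmx1 qform_conj qform1 nrm2_ge0.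
Qed.

Lemma psd_diag n (d : 'rV[C]_n) : (forall i, 0 <= d 0 i) -> psd (diag_mx d).
Proof.
move=> d_ge0; split; first by apply: adjmx_diag => i; exact: ger0_real.
move=> v; rewrite mul_mx_diag !mxE; apply: sumr_ge0 => i _.
by rewrite !adjmxE !mxE mulrAC mulr_ge0 // mul_conjC_ge0.
Qed.

Lemma psdD n (M N : 'M[C]_n) : psd M -> psd N -> psd (M + N).
Proof.
move=> [M_herm M_ge0] [N_herm N_ge0].
split; first by rewrite /Defs.hermitian adjmxD M_herm N_herm.
by move=> v; rewrite -/(qform _ v) qformD addr_ge0 ?M_ge0 ?N_ge0.
Qed.

Lemma psdZ n a (M : 'M[C]_n) : 0 <= a -> psd M -> psd (a *: M).
Proof.
move=> a_ge0 [M_herm M_ge0].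
split; first by rewrite /Defs.hermitian adjmxZ geC0_conj // M_herm.
by move=> v; rewrite -/(qform _ v) qformZ mulr_ge0 ?M_ge0.
Qed.

Lemma psd_conj m n (X : 'M[C]_(m, n)) (M : 'M[C]_m) : psd M -> psd (X^H *m M *m X).
Proof.
move=> [M_herm M_ge0].
split; first by rewrite /Defs.hermitian !adjmxM adjmxK M_herm mulmxA.
by move=> v; rewrite -/(qform _ v) qform_conj M_ge0.
Qed.

Lemma psd_diag_ge0 n (M : 'M[C]_n) i : psd M -> 0 <= M i i.
Proof. by case=> _ M_ge0; rewrite -qform_delta M_ge0. Qed.

Lemma loewner_le_qform n (M N : 'M[C]_n) v : loewner_le M N -> qform M v <= qform N v.
Proof. by case=> _ /(_ v); rewrite -/(qform _ v) qformB subr_ge0. Qed.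

Lemma loewner_le_trans n (M N P : 'M[C]_n) :
  loewner_le M N -> loewner_le N P -> loewner_le M P.
Proof.
rewrite /loewner_le => MN NP.
have -> : P - M = (P - N) + (N - M) by rewrite addrA subrK.
exact: psdD.
Qed.

Lemma loewner_leZ n a (M N : 'M[C]_n) :
  0 <= a -> loewner_le M N -> loewner_le (a *: M) (a *: N).
Proof. by rewrite /loewner_le -scalerBr; exact: psdZ. Qed.

Lemma loewner_le_conj m n (X : 'M[C]_(m, n)) (M N : 'M[C]_m) :
  loewner_le M N -> loewner_le (X^H *m M *m X) (X^H *m N *m X).
Proof. by rewrite /loewner_le -mulmxBl -mulmxBr; exact: psd_conj. Qed.

Lemma loewner_le_diag n (d e : 'rV[C]_n) :
  (forall i, d 0 i <= e 0 i) -> loewner_le (diag_mx d) (diag_mx e).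
Proof.
move=> le_de; rewrite /loewner_le -raddfB /=; apply: psd_diag => i.
by rewrite !mxE subr_ge0.
Qed.

Lemma loewner_le_orth_proj n (P R : 'M[C]_n) :
  Defs.hermitian P -> P *m P = P -> Defs.hermitian R -> R *m R = R ->
  R *m P = P -> loewner_le P R.
Proof.
move=> P_herm P_idem R_herm R_idem RP; have PR : P *m R = P.
  by rewrite -[P in LHS]P_herm -R_herm -adjmxM RP P_herm.
apply: psd_orth_proj; first by rewrite /Defs.hermitian adjmxB P_herm R_herm.
by rewrite mulmxBl !mulmxBr R_idem RP PR P_idem subrr subr0.
Qed.

Lemma nrm2_row m n (W : 'M[C]_(m, n)) i : nrm2 (row i W) = (W *m W^H) i i.
Proof. by rewrite /nrm2 !mxE; apply: eq_bigr => k _; rewrite !adjmxE !mxE. Qed.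

Lemma orth_proj_uniq m n (P Q : 'M[C]_n) (W : 'M[C]_(m, n)) :
  is_orth_proj P W -> is_orth_proj Q W -> P = Q.
Proof.
move=> [P_herm P_idem PW] [Q_herm Q_idem QW].
have PQ : (P :=: Q)%MS := eqmx_trans (eqmxP PW) (eqmx_sym (eqmxP QW)).
have /submxP [X PE] : (P <= Q)%MS by rewrite PQ.
have /submxP [Y QE] : (Q <= P)%MS by rewrite PQ.
have PQP : P *m Q = P by rewrite PE -mulmxA Q_idem.
have QPQ : Q *m P = Q by rewrite QE -mulmxA P_idem.
by rewrite -PQP -P_herm -Q_herm -adjmxM QPQ.
Qed.

Lemma gram_diagE m n (W : 'M[C]_(m, n)) (g : 'rV[C]_m) :
  W *m W^H = diag_mx g -> forall i, g 0 i = nrm2 (row i W).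
Proof. by move=> WW i; rewrite nrm2_row WW mxE eqxx mulr1n. Qed.

(* Zero rows of W are harmless since 0^-1 = 0. *)
Lemma gram_orth_proj m n (W : 'M[C]_(m, n)) (g : 'rV[C]_m) :
  W *m W^H = diag_mx g ->
  is_orth_proj (W^H *m diag_mx (\row_i (g 0 i)^-1) *m W) W.
Proof.
move=> WW; set E := diag_mx _; have g_nrm2 := gram_diagE WW.
have EgE : E *m diag_mx g *m E = E.
  rewrite !mulmx_diag; congr diag_mx; apply/rowP => i; rewrite !mxE.
  by have [->|g_neq0] := eqVneq (g 0 i) 0; rewrite ?invr0 ?mulr0 // mulVf ?mul1r.
have gEW : diag_mx g *m E *m W = W.
  rewrite mulmx_diag; apply/matrixP => i j; rewrite mul_diag_mx !mxE.
  have [g0|g_neq0] := eqVneq (g 0 i) 0; last by rewrite mulfV // mul1r.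
  move/eqP: g0; rewrite g_nrm2 nrm2_eq0 => /eqP /rowP /(_ j).
  by rewrite !mxE => ->; rewrite mulr0.
split.
- rewrite /Defs.hermitian !adjmxM adjmxK adjmx_diag ?mulmxA // => i.
  by rewrite mxE realV g_nrm2 ger0_real // nrm2_ge0.
- by rewrite -!mulmxA (mulmxA W) WW (mulmxA E) (mulmxA (E *m _)) EgE mulmxA.
- apply/andP; split; first exact: submxMl.
  by rewrite -{1}gEW -WW -!mulmxA submxMl.
Qed.

Lemma mxtrace_conj_diag n (M U : 'M[C]_n) (x : 'rV[C]_n) :
  \tr (M *m (U^H *m diag_mx x *m U)) = \sum_i (U *m M *m U^H) i i * x 0 i.
Proof.
rewrite !mulmxA mxtrace_mulC !mulmxA mul_mx_diag.
by apply: eq_bigr => i _; rewrite mxE.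
Qed.

Lemma mxtrace_compress n (P rho M : 'M[C]_n) :
  Defs.hermitian P -> Defs.hermitian rho -> rho *m P = rho ->
  \tr (rho *m M) = \tr (rho *m (P *m M *m P)).
Proof.
move=> P_herm rho_herm rhoP; have Prho : P *m rho = rho.
  by rewrite -[in LHS]rho_herm -P_herm -adjmxM rhoP rho_herm.
by rewrite -{1}Prho -mulmxA mxtrace_mulC -{1}rhoP !mulmxA.
Qed.

Lemma hermitian_spectral n (K : 'M[C]_n) : Defs.hermitian K ->
  exists U (d : 'rV[C]_n),
    [/\ K = U^H *m diag_mx d *m U, U *m U^H = 1%:M & U^H *m U = 1%:M].
Proof.
move=> K_herm; have K_hermsym : K \is hermsymmx.
  by rewrite is_hermitianmxE expr0 scale1r -adjmxE K_herm.
have /orthomx_spectralP KE := hermitian_normalmx K_hermsym.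
have U_unitary := spectral_unitarymx K.
exists (spectralmx K), (spectral_diag K); split.
- by rewrite {1}KE invmx_unitary // adjmxE.
- by rewrite adjmxE; apply/unitarymxP.
- by rewrite adjmxE -invmx_unitary // mulVmx // spectral_unit.
Qed.

End HermitianMatrices.

Definition spectral_cut (C : numClosedFieldType) n (c : C) (d : 'rV[C]_n) (U : 'M[C]_n) :
  'M[C]_n := diag_mx (\row_i (c <= d 0 i)%R%:R) *m U.

Section SpectralCut.
Variables (C : numClosedFieldType) (n : nat) (PA PB U : 'M[C]_n) (d : 'rV[C]_n) (c : C).
Hypotheses (PA_herm : Defs.hermitian PA) (PA_idem : PA *m PA = PA).
Hypotheses (PB_herm : Defs.hermitian PB) (PB_idem : PB *m PB = PB).
Hypothesis PAPBPA_spectral : PA *m PB *m PA = U^H *m diag_mx d *m U.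
Hypotheses (UUh : U *m U^H = 1%:M) (UhU : U^H *m U = 1%:M).
Hypothesis c_gt0 : 0 < c.

Local Notation s := (\row_i (c <= d 0 i)%R%:R : 'rV[C]_n).
Local Notation A := (spectral_cut c d U).
Let g := \row_i (s 0 i * d 0 i).

Lemma spectral_mask_idem : diag_mx s *m diag_mx s = diag_mx s.
Proof.
rewrite mulmx_diag; congr diag_mx; apply/rowP => i; rewrite !mxE.
by case: (c <= d 0 i); rewrite ?mulr1 ?mulr0.
Qed.

Lemma spectral_mask_herm : (diag_mx s)^H = diag_mx s.
Proof. by apply: adjmx_diag => i; rewrite mxE; case: (c <= d 0 i). Qed.

Lemma spectral_cut_PA : A *m PA = A.
Proof.
have sE : diag_mx s = diag_mx (\row_i (s 0 i / d 0 i)) *m diag_mx d.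
  rewrite mulmx_diag; congr diag_mx; apply/rowP => i; rewrite !mxE.
  have [le_cd|] := boolP (c <= d 0 i); last by rewrite !mul0r.
  by rewrite mul1r mulVf // gt_eqF // (lt_le_trans c_gt0 le_cd).
(* Selected rows satisfy u_i = d_i^-1 u_i K with d_i > 0, and K ends with PA. *)
have -> : A = diag_mx (\row_i (s 0 i / d 0 i)) *m U *m PA *m PB *m PA.
  rewrite /spectral_cut sE -!mulmxA (mulmxA PA) PAPBPA_spectral.
  by rewrite !mulmxA -(mulmxA _ U) UUh mulmx1.
by rewrite -mulmxA PA_idem.
Qed.

Lemma spectral_cut_PB_PA : A *m PB *m PA = diag_mx g *m U.
Proof.
rewrite -{1}spectral_cut_PA /spectral_cut -!mulmxA (mulmxA PA) PAPBPA_spectral.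
by rewrite !mulmxA -(mulmxA _ U) UUh mulmx1 mulmx_diag.
Qed.

Lemma spectral_cut_adj : A^H = U^H *m diag_mx s.
Proof. by rewrite adjmxM spectral_mask_herm. Qed.

Lemma PA_spectral_cut_adj : PA *m A^H = A^H.
Proof. by rewrite -{2}spectral_cut_PA adjmxM PA_herm. Qed.

Lemma spectral_cut_gram : A *m A^H = diag_mx s.
Proof.
rewrite spectral_cut_adj /spectral_cut -mulmxA (mulmxA U) UUh mul1mx.
exact: spectral_mask_idem.
Qed.

Lemma spectral_cut_PB_gram : (A *m PB) *m (A *m PB)^H = diag_mx g.
Proof.
rewrite adjmxM PB_herm -PA_spectral_cut_adj !mulmxA -(mulmxA _ PB PB) PB_idem.
rewrite spectral_cut_PB_PA spectral_cut_adj mulmxA -(mulmxA _ U) UUh mulmx1 mulmx_diag.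
congr diag_mx; apply/rowP => i; rewrite !mxE.
by case: (c <= d 0 i); rewrite ?mulr1 ?mul0r.
Qed.

Lemma spectral_cut_nrm2 v : (v <= A)%MS -> c * nrm2 v <= nrm2 (v *m PB).
Proof.
case/submxP => w ->.
rewrite -mulmxA !nrm2_mulmx spectral_cut_PB_gram spectral_cut_gram.
rewrite -qformZ diag_mxZ; apply/loewner_le_qform/loewner_le_diag => i.
rewrite !mxE; have [le_cd|_] := boolP (c <= d 0 i).
  by rewrite mulr1 mul1r.
by rewrite mulr0 mul0r.
Qed.

Let ginv := \row_i (g 0 i)^-1.

Lemma spectral_cut_projE P : is_orth_proj P (A *m PB) ->
  P = (A *m PB)^H *m diag_mx ginv *m (A *m PB).
Proof. by move/orth_proj_uniq; apply; exact: gram_orth_proj spectral_cut_PB_gram. Qed.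

Lemma spectral_cut_proj_le P : is_orth_proj P (A *m PB) ->
  loewner_le P (c^-1 *: (PB *m PA *m PB)).
Proof.
move/spectral_cut_projE ->.
apply: (@loewner_le_trans _ _ _ ((A *m PB)^H *m (c^-1 *: diag_mx s) *m (A *m PB))).
  apply: loewner_le_conj; rewrite diag_mxZ; apply: loewner_le_diag => i; rewrite !mxE.
  have [le_cd|] := boolP (c <= d 0 i); last by rewrite !mul0r invr0 mulr0.
  by rewrite !mul1r mulr1 lef_pV2 ?posrE // (lt_le_trans c_gt0 le_cd).
rewrite -scalemxAr -scalemxAl; apply: loewner_leZ; first by rewrite invr_ge0 ltW.
have sA : diag_mx s *m A = A by rewrite /spectral_cut mulmxA spectral_mask_idem.
have cut_le_PA : loewner_le (A^H *m A) PA.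
  apply: loewner_le_orth_proj => //.
  - by rewrite /Defs.hermitian adjmxM adjmxK.
  - by rewrite mulmxA -(mulmxA _ A) spectral_cut_gram -mulmxA sA.
  - by rewrite mulmxA PA_spectral_cut_adj.
have := loewner_le_conj PB cut_le_PA.
rewrite PB_herm adjmxM PB_herm -!mulmxA (mulmxA (diag_mx _) (diag_mx _)).
by rewrite spectral_mask_idem; apply.
Qed.

Lemma spectral_cut_trace_proj P rho :
  is_orth_proj P (A *m PB) -> Defs.hermitian rho -> rho *m PA = rho ->
  \tr (rho *m P) = \sum_i (U *m rho *m U^H) i i * g 0 i.
Proof.
move=> /spectral_cut_projE -> rho_herm rhoPA.
rewrite (mxtrace_compress _ PA_herm rho_herm rhoPA) -mxtrace_conj_diag.
congr (\tr (_ *m _)).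
have g_real i : g 0 i \is Num.real.
  by rewrite ger0_real // (gram_diagE spectral_cut_PB_gram) nrm2_ge0.
have -> : PA *m ((A *m PB)^H *m diag_mx ginv *m (A *m PB)) *m PA =
    (A *m PB *m PA)^H *m diag_mx ginv *m (A *m PB *m PA).
  by rewrite !adjmxM PA_herm !mulmxA.
rewrite spectral_cut_PB_PA adjmxM adjmx_diag // !mulmxA; congr (_ *m _).
rewrite -!mulmxA; congr (_ *m _).
rewrite !mulmx_diag; congr diag_mx; apply/rowP => i; rewrite !mxE.
set x := _ * d 0 i.
by have [->|x_neq0] := eqVneq x 0; rewrite ?mul0r // mulVf ?mulr1.
Qed.

Lemma spectral_le1 i : d 0 i <= 1.
Proof.
have orth_proj_le1 P : Defs.hermitian P -> P *m P = P -> loewner_le P 1%:M.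
  move=> P_herm P_idem; apply: loewner_le_orth_proj => //.
  - exact: adjmx1.
  - exact: mul1mx.
  - exact: mul1mx.
have K_le1 : loewner_le (PA *m PB *m PA) 1%:M.
  rewrite /loewner_le (_ : _ - _ = (1%:M - PA) + PA^H *m (1%:M - PB) *m PA).
    by apply: psdD; [exact: orth_proj_le1 | apply/psd_conj/orth_proj_le1].
  by rewrite PA_herm mulmxBr mulmxBl mulmx1 PA_idem addrA subrK.
have := loewner_le_conj U^H K_le1; rewrite adjmxK mulmx1 UUh PAPBPA_spectral.
rewrite !mulmxA UUh mul1mx -mulmxA UUh mulmx1 => /(psd_diag_ge0 i).
by rewrite !mxE eqxx mulr1n subr_ge0.
Qed.

Lemma spectral_cut_trace_ge t rho :
  c = 1 - t -> 0 <= t -> psd rho -> \tr rho <= 1 -> rho *m PA = rho ->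
  1 - t ^+ 2 <= \tr (rho *m PB) ->
  A != 0 /\ forall P, is_orth_proj P (A *m PB) -> 1 - t <= \tr (rho *m P).
Proof.
move=> cE t_ge0 [rho_herm rho_ge0] tr_rho rhoPA tr_rhoPB.
pose r i := (U *m rho *m U^H) i i.
have r_ge0 i : 0 <= r i.
  by apply: psd_diag_ge0; rewrite -[U in U *m rho]adjmxK; apply: psd_conj.
have t_le1 : t <= 1 by rewrite -subr_ge0 -cE ltW.
have r_sum : \sum_i r i <= 1.
  suff <- : \tr rho = \sum_i r i by [].
  rewrite -[rho in LHS]mulmx1 -UhU -[U^H]mulmx1 -diag_const_mx mxtrace_conj_diag.
  by apply: eq_bigr => i _; rewrite [X in _ * X]mxE mulr1.
have rd_sum : 1 - t ^+ 2 <= \sum_i r i * d 0 i.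
  by rewrite -mxtrace_conj_diag -PAPBPA_spectral -mxtrace_compress.
have trP P : is_orth_proj P (A *m PB) -> 1 - t <= \tr (rho *m P).
  move=> P_proj; rewrite (spectral_cut_trace_proj P_proj rho_herm rhoPA).
  rewrite (eq_bigr (fun i => r i * ((1 - t <= d 0 i)%R%:R * d 0 i))) => [|i _].
    exact: threshold_mass_ge t_ge0 t_le1 r_ge0 spectral_le1 r_sum rd_sum.
  by congr (_ * _); rewrite !mxE cE.
split=> //; apply/eqP => A0.
have := trP _ (gram_orth_proj spectral_cut_PB_gram).
rewrite A0 mul0mx mulmx0 mulmx0 mxtrace0 -cE.
by move=> /(lt_le_trans c_gt0); rewrite ltxx.
Qed.

End SpectralCut.

Theorem lemma4 (C : numClosedFieldType) (n : nat)
    (A' B' PA' PB' : 'M[C]_n) (eps : C) :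
  is_orth_proj PA' A' -> is_orth_proj PB' B' ->
  0 <= eps -> eps < 1 ->
  exists A : 'M[C]_n,
    (A <= A')%MS /\
    (* (a) *)
    (forall v : 'rV[C]_n, (v <= A)%MS ->
       (1 - sqrtC eps) * nrm2 v <= nrm2 (v *m PB')) /\
    (* (b)  B := span { Pi_{B'} v | v in A } = row space of A *m PB' *)
    (forall PB : 'M[C]_n, is_orth_proj PB (A *m PB') ->
       loewner_le PB ((1 - sqrtC eps)^-1 *: (PB' *m PA' *m PB'))) /\
    (* (c) *)
    (forall rho : 'M[C]_n,
       psd rho -> \tr rho <= 1 -> (rho <= A')%MS ->
       1 - eps <= \tr (rho *m PB') ->
       A != 0 /\
       forall PB : 'M[C]_n, is_orth_proj PB (A *m PB') ->
         1 - 2 * sqrtC eps <= \tr (rho *m PB)).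
Proof.
move=> [PA_herm PA_idem PA_A'] [PB_herm PB_idem _] eps_ge0 eps_lt1.
have t_ge0 : 0 <= sqrtC eps by rewrite sqrtC_ge0.
have c_gt0 : 0 < 1 - sqrtC eps by rewrite subr_gt0 -sqrtC1 ltr_sqrtC // nnegrE.
have K_herm : Defs.hermitian (PA' *m PB' *m PA').
  by rewrite /Defs.hermitian !adjmxM PA_herm PB_herm mulmxA.
have [U [d [KE UUh UhU]]] := hermitian_spectral K_herm.
exists (spectral_cut (1 - sqrtC eps) d U); split; [|split; [|split]].
- by rewrite -(eqmxP PA_A') -(spectral_cut_PA PA_idem KE UUh c_gt0) submxMl.
- exact: (spectral_cut_nrm2 PA_herm PA_idem PB_herm PB_idem KE UUh c_gt0).
- exact: (spectral_cut_proj_le PA_herm PA_idem PB_herm PB_idem KE UUh c_gt0).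
move=> rho rho_psd tr_rho rho_A' tr_rhoPB.
have /submxP [X rhoE] : (rho <= PA')%MS by rewrite (eqmxP PA_A').
have rhoPA : rho *m PA' = rho by rewrite rhoE -mulmxA PA_idem.
have tr_rhoPB' : 1 - sqrtC eps ^+ 2 <= \tr (rho *m PB') by rewrite sqrtCK.
have [A_neq0 trP] := spectral_cut_trace_ge PA_herm PA_idem PB_herm PB_idem KE UUh UhU
  c_gt0 (erefl _) t_ge0 rho_psd tr_rho rhoPA tr_rhoPB'.
split=> // P P_proj; apply: le_trans (trP P P_proj).
by rewrite lerD2l lerN2 ler_peMl // ler1n.
Qed.
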